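(* Let $c=(c_k)_{k\ge1}$ be a sequence of complex numbers. Then $$\|T_c\|\le \sup_{k\ge1}|c_k|+2\sup_{k\ge2}k|c_k-c_{k-1}|,$$ and $$\|T_c\|\ge \sup_{k\ge1}\bigl\{|c_k|^2+(k-1)|c_k-c_{k-1}|^2\bigr\}^{1/2}.$$
   Context: For a complex sequence $c=(c_k)_{k\ge1}$, $T_c$ is the infinite matrix indexed by $j,k\ge1$ with entries $(T_c)_{jk}=c_k$ if $j=k$, $(T_c)_{jk}=c_k-c_{k-1}$ if $j<k$, and $(T_c)_{jk}=0$ if $j>k$. $\|T_c\|$ denotes its operator norm on $\ell^2$ if it acts boundedly, and $\|T_c\|=\infty$ otherwise. *)

From Stdlib Require Import Reals Arith.
From Coquelicot Require Import Coquelicot.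
Open Scope R_scope.

(* A complex sequence c = (c_k)_{k>=1} is modelled as c : nat -> C; the value
   c 0 is never used (it only appears multiplied by 0 in the lower bound). *)

(* Entries of T_c, indices j,k >= 1. *)
Definition Tentry (c : nat -> C) (j k : nat) : C :=
  if Nat.eqb j k then c k
  else if Nat.ltb j k then Cminus (c k) (c (k - 1)%nat)
  else RtoC 0.

Definition l2n (n : nat) (x : nat -> C) : R :=
  sqrt (sum_n_m (fun j => (Cmod (x j)) ^ 2) 1 n).

Definition Tapply (c : nat -> C) (n : nat) (x : nat -> C) (j : nat) : C :=
  sum_n_m (fun k => Cmult (Tentry c j k) (x k)) 1 n.

(* Operator norm of T_c on l^2, in [0, +oo]: supremum of ||T_c x|| over finitely
   supported x with ||x|| <= 1.  Since T_c is upper triangular, T_c x is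
   supported on 1..n when x is.  Equals +oo iff T_c does not act boundedly. *)
Definition opnorm (c : nat -> C) : Rbar :=
  Lub_Rbar (fun r => exists (n : nat) (x : nat -> C),
                l2n n x <= 1 /\ r = l2n n (Tapply c n x)).

Definition sup_abs (c : nat -> C) : Rbar :=
  Lub_Rbar (fun r => exists k : nat, (1 <= k)%nat /\ r = Cmod (c k)).

Definition sup_kdiff (c : nat -> C) : Rbar :=
  Lub_Rbar (fun r => exists k : nat, (2 <= k)%nat /\
               r = INR k * Cmod (Cminus (c k) (c (k - 1)%nat))).

Definition lower_sup (c : nat -> C) : Rbar :=
  Lub_Rbar (fun r => exists k : nat, (1 <= k)%nat /\
               r = sqrt ((Cmod (c k)) ^ 2 +
                         INR (k - 1) * (Cmod (Cminus (c k) (c (k - 1)%nat))) ^ 2)).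

From Stdlib Require Import Reals Arith Lia Lra Psatz.
From Coquelicot Require Import Coquelicot.
Open Scope R_scope.

(* Put A = sup_k |c_k| and M = sup_{k>=2} k |c_k - c_{k-1}|.  For a
   vector x supported on 1..n, the triangle inequality bounds the j-th entry of
   T_c x by  A |x_j| + (H* a)_j,  where a_k = M |x_k| and  (H* a)_j = sum_{k>=j} a_k/k
   is the dual Hardy operator.  The discrete Hardy inequality ||H* a|| <= 2 ||a||
   (proved by a telescoping estimate and Cauchy-Schwarz) and Minkowski's
   inequality then give ||T_c x|| <= (A + 2M) ||x||.

   Lower bound.  The k-th unit vector e_k is mapped to the k-th column of T_c,
   whose squared norm is |c_k|^2 + (k-1)|c_k - c_{k-1}|^2. *)

Lemma sum_plusR (f g : nat -> R) n m :
  sum_n_m (fun k => f k + g k) n m = sum_n_m f n m + sum_n_m g n m.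
Proof. exact (sum_n_m_plus (G:=R_AbelianMonoid) f g n m). Qed.

Lemma sum_scalR (r : R) (f : nat -> R) n m :
  sum_n_m (fun k => r * f k) n m = r * sum_n_m f n m.
Proof. exact (sum_n_m_mult_l (K:=R_Ring) r f n m). Qed.

Lemma sum_le_loc (f g : nat -> R) n m :
  (forall k, (n <= k <= m)%nat -> f k <= g k) -> sum_n_m f n m <= sum_n_m g n m.
Proof.
  induction m as [|m IH]; intros H.
  - destruct n.
    + rewrite !sum_n_n. apply H; lia.
    + rewrite !sum_n_m_zero; [apply Rle_refl | lia | lia].
  - destruct (le_lt_dec n (S m)) as [h|h].
    + rewrite !sum_n_Sm by lia. apply Rplus_le_compat.
      * apply IH; intros; apply H; lia.
      * apply H; lia.
    + rewrite !sum_n_m_zero; [apply Rle_refl | lia | lia].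
Qed.

Lemma sum_ge0 (f : nat -> R) n m :
  (forall k, (n <= k <= m)%nat -> 0 <= f k) -> 0 <= sum_n_m f n m.
Proof.
  intros H. replace 0 with (sum_n_m (fun _ => 0) n m)
    by exact (sum_n_m_const_zero (G:=R_AbelianMonoid) n m).
  apply sum_le_loc; auto.
Qed.

Lemma sum_delta {G : AbelianMonoid} (v : G) j n m :
  (n <= j <= m)%nat ->
  sum_n_m (fun k => if Nat.eqb j k then v else zero) n m = v.
Proof.
  induction m as [|m IH]; intros H.
  - assert (j = 0 /\ n = 0)%nat as [-> ->] by lia. now rewrite sum_n_n.
  - rewrite sum_n_Sm by lia.
    destruct (Nat.eqb_spec j (S m)) as [->|hne].
    + rewrite (sum_n_m_ext_loc _ (fun _ => zero)).
      * rewrite sum_n_m_const_zero. apply plus_zero_l.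
      * intros k hk. destruct (Nat.eqb_spec (S m) k); [lia | auto].
    + rewrite IH by lia. apply plus_zero_r.
Qed.

Lemma sum_from (f : nat -> R) j m : (1 <= j <= m)%nat ->
  sum_n_m (fun k => if Nat.leb j k then f k else 0) 1 m = sum_n_m f j m.
Proof.
  intros hj. rewrite (sum_n_m_Chasles _ 1 (j - 1) m) by lia.
  replace (S (j - 1)) with j by lia.
  rewrite (sum_n_m_ext_loc _ (fun _ => zero) 1 (j - 1)).
  2:{ intros k hk. destruct (Nat.leb_spec j k); [lia | reflexivity]. }
  rewrite sum_n_m_const_zero, plus_zero_l.
  apply sum_n_m_ext_loc. intros k hk. destruct (Nat.leb_spec j k); [reflexivity | lia].
Qed.

Lemma cauchy_schwarz_step P U V a b : P ^ 2 <= U * V -> 0 <= U -> 0 <= V ->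
  (P + a * b) ^ 2 <= (U + a ^ 2) * (V + b ^ 2).
Proof.
  intros H U0 V0.
  assert (Hy : 0 <= a ^ 2 * V + b ^ 2 * U).
  { pose proof (pow2_ge_0 a); pose proof (pow2_ge_0 b); nra. }
  assert (Hcross : (2 * a * b * P) ^ 2 <= (a ^ 2 * V + b ^ 2 * U) ^ 2).
  { assert (0 <= (a ^ 2 * V - b ^ 2 * U) ^ 2) by apply pow2_ge_0.
    assert (0 <= (a * b) ^ 2 * (U * V - P ^ 2)) by (apply Rmult_le_pos; [apply pow2_ge_0 | lra]).
    nra. }
  assert (2 * a * b * P <= a ^ 2 * V + b ^ 2 * U) by nra.
  nra.
Qed.

Lemma cauchy_schwarz (u v : nat -> R) n m :
  (sum_n_m (fun k => u k * v k) n m) ^ 2 <=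
  sum_n_m (fun k => u k ^ 2) n m * sum_n_m (fun k => v k ^ 2) n m.
Proof.
  induction m as [|m IH].
  - destruct n.
    + rewrite !sum_n_n. nra.
    + rewrite !sum_n_m_zero by lia. unfold zero; simpl. nra.
  - destruct (le_lt_dec n (S m)) as [h|h].
    + rewrite !sum_n_Sm by lia.
      apply cauchy_schwarz_step; auto; apply sum_ge0; intros; apply pow2_ge_0.
    + rewrite !sum_n_m_zero by lia. unfold zero; simpl. nra.
Qed.

Definition rnorm (n : nat) (f : nat -> R) : R :=
  sqrt (sum_n_m (fun j => f j ^ 2) 1 n).

Lemma rnorm_ge0 n f : 0 <= rnorm n f.
Proof. apply sqrt_pos. Qed.

Lemma rnorm_sq n f : rnorm n f ^ 2 = sum_n_m (fun j => f j ^ 2) 1 n.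
Proof. apply pow2_sqrt, sum_ge0. intros; apply pow2_ge_0. Qed.

Lemma l2n_rnorm n (x : nat -> C) : l2n n x = rnorm n (fun j => Cmod (x j)).
Proof. reflexivity. Qed.

Lemma rnorm_mono n (f g : nat -> R) :
  (forall j, (1 <= j <= n)%nat -> 0 <= f j <= g j) -> rnorm n f <= rnorm n g.
Proof.
  intros H. apply sqrt_le_1_alt, sum_le_loc. intros j hj.
  destruct (H j hj). apply pow_incr. lra.
Qed.

Lemma rnorm_scal n (r : R) f : 0 <= r -> rnorm n (fun j => r * f j) = r * rnorm n f.
Proof.
  intros hr. unfold rnorm.
  rewrite (sum_n_m_ext _ (fun j => r ^ 2 * f j ^ 2)) by (intros; simpl; ring).
  rewrite sum_scalR, sqrt_mult_alt by apply pow2_ge_0.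
  now rewrite sqrt_pow2.
Qed.

Lemma sum_mult_le_rnorm n (f g : nat -> R) :
  sum_n_m (fun j => f j * g j) 1 n <= rnorm n f * rnorm n g.
Proof.
  pose proof (cauchy_schwarz f g 1 n) as CS.
  rewrite <- (rnorm_sq n f), <- (rnorm_sq n g) in CS.
  pose proof (rnorm_ge0 n f); pose proof (rnorm_ge0 n g).
  assert (0 <= rnorm n f * rnorm n g) by nra.
  nra.
Qed.

Lemma rnorm_triangle n (f g : nat -> R) :
  rnorm n (fun j => f j + g j) <= rnorm n f + rnorm n g.
Proof.
  assert (Hexp : sum_n_m (fun j => (f j + g j) ^ 2) 1 n =
                 rnorm n f ^ 2 + 2 * sum_n_m (fun j => f j * g j) 1 n + rnorm n g ^ 2).
  { rewrite !rnorm_sq, <- sum_scalR, <- !sum_plusR. apply sum_n_m_ext. intros; simpl; ring. }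
  pose proof (sum_mult_le_rnorm n f g).
  pose proof (rnorm_ge0 n f); pose proof (rnorm_ge0 n g).
  rewrite <- (sqrt_pow2 (rnorm n f + rnorm n g)) by lra.
  apply sqrt_le_1_alt. rewrite Hexp. nra.
Qed.

(* (H* a)_j = sum_{k=j}^n a_k / k, the adjoint of the Hardy averaging operator. *)
Definition dual_hardy (a : nat -> R) (n j : nat) : R :=
  sum_n_m (fun k => a k / INR k) j n.

(* Telescoping estimate, proved by downward induction on m (with d = n+1-m):
   sum_{j>=m} (H* a)_j^2 + (m-1) (H* a)_m^2 <= 2 sum_{j>=m} a_j (H* a)_j. *)
Lemma hardy_partial (a : nat -> R) n d : forall m, (m + d = S n)%nat -> (1 <= m)%nat ->
  sum_n_m (fun j => dual_hardy a n j ^ 2) m n + (INR m - 1) * dual_hardy a n m ^ 2 <=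
  2 * sum_n_m (fun j => a j * dual_hardy a n j) m n.
Proof.
  induction d as [|d IH]; intros m Hm H1.
  - assert (m = S n) by lia. subst m. unfold dual_hardy.
    rewrite !sum_n_m_zero by lia. unfold zero; simpl. lra.
  - assert (Hl : (m <= n)%nat) by lia.
    specialize (IH (S m) ltac:(lia) ltac:(lia)). rewrite S_INR in IH.
    rewrite !(sum_Sn_m _ m n Hl). unfold plus; simpl in IH |- *.
    assert (Hm0 : 0 < INR m) by (apply lt_0_INR; lia).
    assert (Hstep : dual_hardy a n m = a m / INR m + dual_hardy a n (S m))
      by (unfold dual_hardy at 1; now rewrite (sum_Sn_m _ m n Hl)).
    set (b := a m / INR m) in *. set (s := dual_hardy a n (S m)) in *.
    assert (Hab : a m = INR m * b) by (unfold b; field; lra).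
    rewrite Hstep, Hab.
    assert (0 <= INR m * b ^ 2) by (apply Rmult_le_pos; [lra | apply pow2_ge_0]).
    nra.
Qed.

Lemma hardy (a : nat -> R) n : rnorm n (dual_hardy a n) <= 2 * rnorm n a.
Proof.
  pose proof (hardy_partial a n n 1 eq_refl (le_n 1)) as H.
  change (INR 1) with 1 in H. rewrite Rminus_diag, Rmult_0_l, Rplus_0_r in H.
  rewrite <- rnorm_sq in H.
  pose proof (sum_mult_le_rnorm n a (dual_hardy a n)).
  pose proof (rnorm_ge0 n a); pose proof (rnorm_ge0 n (dual_hardy a n)).
  nra.
Qed.

Section UpperEstimate.
Variables (c : nat -> C) (A M : R).
Hypothesis hM : 0 <= M.
Hypothesis hc : forall k, (1 <= k)%nat -> Cmod (c k) <= A.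
Hypothesis hd : forall k, (2 <= k)%nat -> INR k * Cmod (Cminus (c k) (c (k - 1)%nat)) <= M.

Lemma Tentry_bound j k : (1 <= j)%nat -> (1 <= k)%nat ->
  Cmod (Tentry c j k) <=
  (if Nat.eqb j k then A else 0) + (if Nat.leb j k then M / INR k else 0).
Proof.
  intros hj hk. assert (Hk : 0 < INR k) by (apply lt_0_INR; lia).
  assert (0 <= M / INR k) by (apply Rdiv_le_0_compat; lra).
  unfold Tentry. destruct (Nat.eqb_spec j k) as [<-|hne].
  - rewrite Nat.leb_refl. pose proof (hc j hk). lra.
  - destruct (Nat.ltb_spec j k) as [hlt|hge].
    + destruct (Nat.leb_spec j k); [|lia].
      apply Rmult_le_reg_l with (INR k); [exact Hk|].
      replace (INR k * (0 + M / INR k)) with M by (field; lra).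
      apply hd; lia.
    + destruct (Nat.leb_spec j k); [lia|]. rewrite Cmod_0. lra.
Qed.

Lemma Tapply_bound n x j : (1 <= j <= n)%nat ->
  Cmod (Tapply c n x j) <=
  A * Cmod (x j) + dual_hardy (fun k => M * Cmod (x k)) n j.
Proof.
  intros hj. unfold Tapply.
  eapply Rle_trans; [apply (norm_sum_n_m (V:=C_NormedModule))|].
  eapply Rle_trans.
  { apply (sum_le_loc _ (fun k =>
      (if Nat.eqb j k then A * Cmod (x j) else 0) +
      (if Nat.leb j k then M * Cmod (x k) / INR k else 0))).
    intros k hk. change (norm ?z) with (Cmod z). rewrite Cmod_mult.
    pose proof (Tentry_bound j k ltac:(lia) ltac:(lia)) as Hb.
    pose proof (Cmod_ge_0 (x k)).
    destruct (Nat.eqb_spec j k) as [->|]; destruct (Nat.leb _ _); unfold Rdiv in *; nra. }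
  rewrite sum_plusR, (sum_delta (G:=R_AbelianMonoid)) by lia.
  rewrite sum_from by lia. apply Rle_refl.
Qed.

Lemma Tapply_norm_bound n x :
  l2n n (Tapply c n x) <= (A + 2 * M) * l2n n x.
Proof.
  rewrite !l2n_rnorm.
  set (u := fun j => Cmod (x j)).
  eapply Rle_trans.
  { apply (rnorm_mono n _ (fun j => A * u j + dual_hardy (fun k => M * u k) n j)).
    intros j hj. split; [apply Cmod_ge_0 | exact (Tapply_bound n x j hj)]. }
  assert (HA : 0 <= A) by (eapply Rle_trans; [apply Cmod_ge_0 | apply (hc 1%nat); lia]).
  eapply Rle_trans; [apply rnorm_triangle|].
  rewrite rnorm_scal by exact HA.
  pose proof (hardy (fun k => M * u k) n) as Hh. rewrite rnorm_scal in Hh by exact hM.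
  lra.
Qed.

End UpperEstimate.

Lemma Lub_Rbar_ub (E : R -> Prop) r : E r -> Rbar_le r (Lub_Rbar E).
Proof. intros H. exact (proj1 (Lub_Rbar_correct E) r H). Qed.

Lemma Lub_Rbar_least (E : R -> Prop) (b : Rbar) :
  (forall r, E r -> Rbar_le r b) -> Rbar_le (Lub_Rbar E) b.
Proof. intros H. exact (proj2 (Lub_Rbar_correct E) b H). Qed.

Lemma Lub_Rbar_not_m_infty (E : R -> Prop) r : E r -> Lub_Rbar E <> m_infty.
Proof. intros H He. pose proof (Lub_Rbar_ub E r H) as Hle. now rewrite He in Hle. Qed.

Lemma Rbar_le_p_infty (x : Rbar) : Rbar_le x p_infty.
Proof. destruct x; simpl; auto. Qed.

Lemma Rbar_mult_2_p_infty : Rbar_mult (Finite 2) p_infty = p_infty.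
Proof.
  unfold Rbar_mult, Rbar_mult'. destruct (Rle_dec 0 2) as [h|]; [|lra].
  destruct (Rle_lt_or_eq_dec 0 2 h); [reflexivity | lra].
Qed.

Lemma upper_bound c :
  Rbar_le (opnorm c) (Rbar_plus (sup_abs c) (Rbar_mult (Finite 2) (sup_kdiff c))).
Proof.
  assert (Ha : sup_abs c <> m_infty)
    by (apply (Lub_Rbar_not_m_infty _ (Cmod (c 1%nat))); now exists 1%nat).
  assert (Hd : sup_kdiff c <> m_infty)
    by (eapply Lub_Rbar_not_m_infty; now exists 2%nat).
  (* If one supremum is +oo the bound is trivial; otherwise both are finite. *)
  destruct (sup_abs c) as [A| |] eqn:EA; [| | easy];
    destruct (sup_kdiff c) as [M| |] eqn:EM; try easy;
    try (rewrite Rbar_mult_2_p_infty; apply Rbar_le_p_infty);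
    try apply Rbar_le_p_infty.
  assert (hc : forall k, (1 <= k)%nat -> Cmod (c k) <= A).
  { intros k hk. change (Rbar_le (Cmod (c k)) (Finite A)). rewrite <- EA.
    apply Lub_Rbar_ub. now exists k. }
  assert (hd : forall k, (2 <= k)%nat -> INR k * Cmod (Cminus (c k) (c (k - 1)%nat)) <= M).
  { intros k hk. change (Rbar_le (INR k * Cmod (Cminus (c k) (c (k - 1)%nat))) (Finite M)).
    rewrite <- EM. apply Lub_Rbar_ub. now exists k. }
  assert (hM : 0 <= M).
  { eapply Rle_trans; [|apply (hd 2%nat); lia].
    apply Rmult_le_pos; [apply pos_INR | apply Cmod_ge_0]. }
  assert (HA : 0 <= A) by (eapply Rle_trans; [apply Cmod_ge_0 | apply (hc 1%nat); lia]).
  apply Lub_Rbar_least. intros r [n [x [Hx ->]]]. simpl.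
  pose proof (Tapply_norm_bound c A M hM hc hd n x).
  assert ((A + 2 * M) * l2n n x <= A + 2 * M) by nra.
  lra.
Qed.

Definition unit_vec (k : nat) (j : nat) : C := if Nat.eqb j k then RtoC 1 else RtoC 0.

Lemma l2n_unit_vec k : (1 <= k)%nat -> l2n k (unit_vec k) = 1.
Proof.
  intros hk. unfold l2n.
  rewrite (sum_n_m_ext_loc _ (fun j => if Nat.eqb k j then 1 else 0)).
  - rewrite (sum_delta (G:=R_AbelianMonoid)) by lia. apply sqrt_1.
  - intros j hj. unfold unit_vec. rewrite Nat.eqb_sym.
    destruct (Nat.eqb k j); [rewrite Cmod_1 | rewrite Cmod_0]; simpl; ring.
Qed.

Lemma Tapply_unit_vec c k j : (1 <= k)%nat ->
  Tapply c k (unit_vec k) j = Tentry c j k.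
Proof.
  intros hk. unfold Tapply.
  rewrite (sum_n_m_ext_loc _ (fun i => if Nat.eqb k i then Tentry c j k else zero)).
  - apply (sum_delta (G:=C_AbelianMonoid)). lia.
  - intros i hi. unfold unit_vec. rewrite Nat.eqb_sym.
    destruct (Nat.eqb_spec k i) as [->|]; [apply Cmult_1_r | apply Cmult_0_r].
Qed.

(* The squared norm of the k-th column: k-1 entries c_k - c_{k-1}, then c_k. *)
Lemma column_sq_norm c k : (1 <= k)%nat ->
  sum_n_m (fun j => Cmod (Tentry c j k) ^ 2) 1 k =
  Cmod (c k) ^ 2 + INR (k - 1) * Cmod (Cminus (c k) (c (k - 1)%nat)) ^ 2.
Proof.
  intros hk. destruct k as [|k]; [lia|].
  rewrite sum_n_Sm by lia.
  rewrite (sum_n_m_ext_loc _ (fun _ => Cmod (Cminus (c (S k)) (c (S k - 1)%nat)) ^ 2)).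
  - rewrite sum_n_m_const. unfold Tentry. rewrite Nat.eqb_refl.
    unfold plus; simpl. replace (k - 0)%nat with k by lia. ring.
  - intros j hj. unfold Tentry.
    destruct (Nat.eqb_spec j (S k)); [lia|]. destruct (Nat.ltb_spec j (S k)); [reflexivity | lia].
Qed.

Lemma lower_bound c : Rbar_le (lower_sup c) (opnorm c).
Proof.
  apply Lub_Rbar_least. intros r [k [hk ->]]. apply Lub_Rbar_ub.
  exists k, (unit_vec k). split.
  - rewrite l2n_unit_vec by exact hk. apply Rle_refl.
  - unfold l2n. rewrite <- column_sq_norm by exact hk. f_equal.
    apply sum_n_m_ext. intros j. now rewrite Tapply_unit_vec.
Qed.

Theorem theorem2 (c : nat -> C) :
  Rbar_le (opnorm c) (Rbar_plus (sup_abs c) (Rbar_mult (Finite 2) (sup_kdiff c))) /\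
  Rbar_le (lower_sup c) (opnorm c).
Proof. split; [apply upper_bound | apply lower_bound]. Qed.
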